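(* Let $S$ be a finite $p$-group and $\mathcal{A}$ a divisible $S$-algebra with an $(S,S)$-invariant $\mathcal{O}$-basis $Y\subseteq\mathcal{A}^\times$. Then $Y$ is $\mathfrak{F}_S(\mathcal{A})$-stable: for every $P\le S$ and every $\varphi\in\mathrm{Hom}_{\mathfrak{F}_S(\mathcal{A})}(P,S)$, ${}^\varphi_PY_S\cong{}_PY_S$ as $(P,S)$-bisets.
   Context: $\mathcal{O}$ is a complete local noetherian domain with maximal ideal $\mathfrak{m}$ and algebraically closed residue field of characteristic $p$. An interior $S$-algebra is an $\mathcal{O}$-free finite-rank $\mathcal{O}$-algebra $\mathcal{A}$ with a group homomorphism $S\to\mathcal{A}^\times$; $S\times S$ acts by $(s,t)a=sat^{-1}$. It is bifree if it has an $\mathcal{O}$-basis $Y$ with $sY=Y=Ys$ for $s\in S$ ($(S,S)$-invariant basis) on which left and right actions are free. For $U\le S\times S$, $\mathcal{A}(U)=\mathcal{A}^U/(\mathfrak{m}\mathcal{A}^U+\sum_{V<U}\mathrm{tr}_V^U\mathcal{A}^V)$; for injective $\varphi:P\to S$, $\mathcal{A}(\varphi)=\mathcal{A}(\Delta(\varphi,P))$, $\Delta(\varphi,P)=\{(\varphi(p),p)\}$. $\mathfrak{F}_S(\mathcal{A})$ has objects the subgroups of $S$ and $\mathrm{Hom}(P,Q)=\{\varphi:P\to Q$ injective$:\mathcal{A}(\varphi)\ne0\}$. A bifree $S$-algebra is divisible if $\mathfrak{F}_S(\mathcal{A})$ contains all inclusions, is closed under composition, and every morphism is an inclusion composed with a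 group isomorphism onto its image that is an isomorphism in $\mathfrak{F}_S(\mathcal{A})$. ${}_PY_S$ is $Y$ with left action restricted to $P$; ${}^\varphi_PY_S$ is $Y$ with action $p\odot y\odot s=\varphi(p)ys$. *)

From HB Require Import structures.
From mathcomp Require Import all_boot all_order all_algebra all_fingroup all_solvable.
Set Implicit Arguments. Unset Strict Implicit. Unset Printing Implicit Defensive.
Import GRing.Theory.
Local Open Scope ring_scope.

Section CoeffRing.
Variable O : idomainType.

(* the maximal ideal m of the local ring O: the non-units *)
Definition mO : {pred O} := [pred x : O | x \isn't a GRing.unit].

Definition is_local : Prop :=
  (forall x y : O, x \in mO -> y \in mO -> x + y \in mO) /\
  (forall x y : O, y \in mO -> x * y \in mO).

Definition is_ideal (I : O -> Prop) : Prop :=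
  I 0 /\ (forall x y, I x -> I y -> I (x + y)) /\ (forall x y, I y -> I (x * y)).

Definition is_noetherian : Prop :=
  forall I : O -> Prop, is_ideal I ->
  exists gens : seq O, forall x, I x <->
    exists c : O -> O, x = \sum_(g <- gens) c g * g.

Fixpoint mpow (n : nat) : O -> Prop :=
  match n with
  | 0 => fun _ => True
  | n'.+1 => fun x => exists s : seq (O * O),
      (forall ab, ab \in s -> ab.1 \in mO /\ mpow n' ab.2) /\
      x = \sum_(ab <- s) ab.1 * ab.2
  end.

(* m-adically separated and complete *)
Definition is_complete : Prop :=
  (forall x : O, (forall n, mpow n x) -> x = 0) /\
  (forall u : nat -> O, (forall n, mpow n (u n.+1 - u n)) ->
     exists l : O, forall n, mpow n (l - u n)).

(* the residue field O/m is algebraically closed *)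
Definition residue_alg_closed : Prop :=
  forall q : {poly O}, (1 < size q)%N -> lead_coef q \is a GRing.unit ->
  exists a : O, q.[a] \in mO.

(* the residue field has characteristic p *)
Definition residue_char (p : nat) : Prop := prime p /\ (p%:R : O) \in mO.

Definition standing_O (p : nat) : Prop :=
  [/\ is_local, is_noetherian, is_complete, residue_alg_closed & residue_char p].
End CoeffRing.

Section InteriorAlg.
Variables (O : idomainType) (A : algType O) (gT : finGroupType).
Variables (S : {group gT}) (sigma : gT -> A).

Definition isunitA (a : A) : Prop := exists b : A, a * b = 1 /\ b * a = 1.

Definition interior_hom : Prop :=
  sigma 1%g = 1 /\ {in S &, forall x y, sigma (x * y)%g = sigma x * sigma y}.

Definition is_basis (Y : seq A) : Prop :=
  uniq Y /\
  (forall a : A, exists c : A -> O, a = \sum_(y <- Y) c y *: y) /\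
  (forall c : A -> O, \sum_(y <- Y) c y *: y = 0 -> {in Y, forall y, c y = 0}).

Definition SS_invariant (Y : seq A) : Prop :=
  forall s, s \in S -> perm_eq [seq sigma s * y | y <- Y] Y /\
                       perm_eq [seq y * sigma s | y <- Y] Y.

Definition bifree : Prop :=
  exists Y : seq A, [/\ is_basis Y, SS_invariant Y,
    (forall s y, s \in S -> y \in Y -> sigma s * y = y -> s = 1%g) &
    (forall s y, s \in S -> y \in Y -> y * sigma s = y -> s = 1%g)].

Definition act2 (u : gT * gT) (a : A) : A := sigma u.1 * a * sigma (u.2)^-1%g.

Definition fixedby (U : {set gT * gT}) (a : A) : Prop :=
  forall u, u \in U -> act2 u a = a.

Definition trace (V U : {set gT * gT}) (a : A) : A :=
  \sum_(C in lcosets V U) act2 (repr C) a.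

(* a lies in  m A^U + sum_{V<U} tr_V^U A^V *)
Definition in_brauer_kernel (U : {set gT * gT}) (x : A) : Prop :=
  exists (s : seq (O * A)) (b : {group gT * gT} -> A),
    [/\ (forall ca, ca \in s -> ca.1 \in @mO O /\ fixedby U ca.2),
        (forall V : {group gT * gT}, V \proper U -> fixedby V (b V)) &
        x = \sum_(ca <- s) ca.1 *: ca.2
            + \sum_(V : {group gT * gT} | V \proper U) trace V U (b V)].

(* A(U) <> 0 *)
Definition brauer_nz (U : {set gT * gT}) : Prop :=
  exists a : A, fixedby U a /\ ~ in_brauer_kernel U a.

Definition Delta (f : gT -> gT) (P : {set gT}) : {set gT * gT} :=
  [set (f x, x) | x in P].

Definition Fhom (P Q : {set gT}) (f : gT -> gT) : Prop :=
  [/\ {in P &, {morph f : x y / (x * y)%g}}, {in P &, injective f},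
      f @: P \subset Q & brauer_nz (Delta f P)].

Definition divisible : Prop :=
  [/\ bifree,
      (forall P Q : {group gT}, P \subset Q -> Q \subset S -> Fhom P Q id),
      (forall (P Q R : {group gT}) (f g : gT -> gT),
          P \subset S -> Q \subset S -> R \subset S ->
          Fhom P Q f -> Fhom Q R g -> Fhom P R (g \o f)) &
      (forall (P Q : {group gT}) (f : gT -> gT),
          P \subset S -> Q \subset S -> Fhom P Q f ->
          Fhom P (f @: P) f /\
          exists g : gT -> gT, [/\ Fhom (f @: P) P g,
             {in P, cancel f g} & {in f @: P, cancel g f}])].
End InteriorAlg.

From HB Require Import structures.
From mathcomp Require Import all_boot all_order all_algebra all_fingroup all_solvable.
From Stdlib Require Import ClassicalEpsilon.
Import GRing.Theory.

(* Some basis element y0 is fixed by Delta(phi, P): otherwise, grouping the coordinates of a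
   Delta-fixed element by orbits writes it as a sum of relative traces from proper stabilisers,
   and A(phi) would vanish.  This unit satisfies sigma(phi x) y0 = y0 sigma(x), so multiplication
   by y0 and by its inverse passes between the (P x S)-sets {}^phi_P Y_S and {}_P Y_S.  For
   H <= P x S, the coordinate matrices of y0 and y0^-1 between the H-fixed points of the two
   bisets multiply to the identity modulo m, because the remaining basis elements fall into
   H-orbits of length divisible by p.  Such a product has nonzero determinant, so comparing ranks
   over the fraction field bounds the number of H-fixed points of one biset by that of the
   other, and symmetrically.  Finite G-sets with the same marks are isomorphic. *)

Set Implicit Arguments.
Unset Strict Implicit.
Unset Printing Implicit Defensive.

Section ActionsWithEqualMarks.
Local Open Scope group_scope.
Variables (aT : finGroupType) (G : {group aT}) (T : finType).
Implicit Types (to : action G T) (x y : T) (D X : {set T}).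

Lemma act_eq_astab1 to x g h : g \in G -> h \in G ->
  (to x g == to x h) = (g * h^-1 \in 'C[x | to]).
Proof.
move=> gG hG; rewrite !inE groupM ?groupV //= sub1set inE actMin ?groupV //.
apply/eqP/eqP => [->|E]; first by rewrite actKin.
by apply: (act_inj to h^-1); rewrite E actKin.
Qed.

Lemma astab1_sub to x : 'C[x | to] \subset G.
Proof. exact: subsetIl. Qed.

Lemma astab1_act_id to x g : g \in 'C[x | to] -> to x g = x.
Proof. by rewrite !inE sub1set inE => /andP[_ /eqP]. Qed.

Lemma astab1_eq_of_maximal to1 to2 D1 D2 x : x \in D1 ->
    (forall y, y \in D2 -> #|'C[y | to2]| <= #|'C[x | to1]|) ->
    #|'Fix_(D1 | to1)('C[x | to1])| = #|'Fix_(D2 | to2)('C[x | to1])| ->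
  exists2 y, y \in D2 & 'C[y | to2] = 'C[x | to1].
Proof.
move=> xD1 maxx eq_fix.
have xF : x \in 'Fix_(D1 | to1)('C[x | to1]).
  by rewrite in_setI xD1 -sub_astab1_in ?subxx ?astab1_sub.
have [y] : exists y, y \in 'Fix_(D2 | to2)('C[x | to1]).
  apply/card_gt0P; rewrite -eq_fix; apply/card_gt0P; exact: (ex_intro _ x xF).
rewrite in_setI -sub_astab1_in ?astab1_sub // => /andP[yD2 sCxCy].
by exists y => //; apply/esym/eqP; rewrite eqEcard sCxCy maxx.
Qed.

Section OrbitTransport.
Variables (to1 to2 : action G T) (x1 x2 : T).
Hypothesis eq_astab : 'C[x1 | to1] = 'C[x2 | to2].

Lemma eq_act_transport g h : g \in G -> h \in G ->
  (to2 x2 g == to2 x2 h) = (to1 x1 g == to1 x1 h).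
Proof. by move=> gG hG; rewrite !act_eq_astab1 // eq_astab. Qed.

(* Both orbits are isomorphic to the coset space of the common stabiliser. *)
Definition orbit_transport y := to1 x1 (odflt 1 [pick g in G | to2 x2 g == y]).

Lemma orbit_transport_act g : g \in G -> orbit_transport (to2 x2 g) = to1 x1 g.
Proof.
move=> gG; rewrite /orbit_transport; case: pickP => [h /andP[hG /eqP E]|/(_ g)].
  by apply/eqP; rewrite -eq_act_transport // E.
by rewrite gG eqxx.
Qed.

Lemma orbit_transport_orbit y :
  y \in orbit to2 G x2 -> orbit_transport y \in orbit to1 G x1.
Proof. by case/imsetP=> g gG ->; rewrite orbit_transport_act ?mem_orbit. Qed.

Lemma orbit_transport_inj : {in orbit to2 G x2 &, injective orbit_transport}.
Proof.
move=> _ _ /imsetP[g gG ->] /imsetP[h hG ->].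
by rewrite !orbit_transport_act // => E; apply/eqP; rewrite eq_act_transport // E.
Qed.

Lemma orbit_transport_actE y h : y \in orbit to2 G x2 -> h \in G ->
  orbit_transport (to2 y h) = to1 (orbit_transport y) h.
Proof.
by case/imsetP=> g gG -> hG; rewrite -actMin // !orbit_transport_act ?groupM // actMin.
Qed.

Lemma orbit_transport_afix (H : {set aT}) : H \subset G ->
  orbit_transport @: 'Fix_(orbit to2 G x2 | to2)(H) = 'Fix_(orbit to1 G x1 | to1)(H).
Proof.
move=> sHG; apply/setP => z; apply/imsetP/idP.
  case=> _ /setIP[/imsetP[g gG ->] /afixP fixg] ->.
  rewrite in_setI orbit_transport_act // mem_orbit //=; apply/afixP => h hH.
  have hG := subsetP sHG h hH.
  by rewrite -orbit_transport_act // -orbit_transport_actE ?mem_orbit // fixg.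
case/setIP=> /imsetP[g gG ->] /afixP fixg; exists (to2 x2 g); last first.
  by rewrite orbit_transport_act.
rewrite in_setI mem_orbit //=; apply/afixP => h hH; have hG := subsetP sHG h hH.
by apply/eqP; rewrite -actMin // eq_act_transport ?groupM // actMin // fixg.
Qed.

Lemma card_afix_orbit_transport (H : {set aT}) : H \subset G ->
  #|'Fix_(orbit to1 G x1 | to1)(H)| = #|'Fix_(orbit to2 G x2 | to2)(H)|.
Proof.
move=> sHG; rewrite -orbit_transport_afix // card_in_imset //.
by apply: sub_in2 orbit_transport_inj => y /setIP[].
Qed.

End OrbitTransport.

Lemma card_afixD to D X (H : {set aT}) : X \subset D ->
  #|'Fix_(D :\: X | to)(H)| = #|'Fix_(D | to)(H)| - #|'Fix_(X | to)(H)|.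
Proof.
move=> sXD; have -> : 'Fix_(D :\: X | to)(H) = 'Fix_(D | to)(H) :\: 'Fix_(X | to)(H).
  apply/setP => y; rewrite !(in_setI, in_setD).
  by case: (y \in 'Fix_to(H)); rewrite ?andbT ?andbF.
by rewrite cardsD (setIidPr (setSI _ sXD)).
Qed.

Lemma exists_eq_astab1 to1 to2 D1 D2 : D1 != set0 -> D2 != set0 ->
    (forall H : {group aT}, H \subset G ->
       #|'Fix_(D1 | to1)(H)| = #|'Fix_(D2 | to2)(H)|) ->
  exists x1, exists2 x2, x1 \in D1 /\ x2 \in D2 & 'C[x1 | to1] = 'C[x2 | to2].
Proof.
move=> /set0Pn[y1 y1D1] /set0Pn[y2 y2D2] eq_marks.
case: (arg_maxnP (fun y => #|'C[y | to1]|) y1D1) => m1 m1D1 max1.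
case: (arg_maxnP (fun y => #|'C[y | to2]|) y2D2) => m2 m2D2 max2.
have [le21 | /ltnW le12] := leqP #|'C[m2 | to2]| #|'C[m1 | to1]|.
  have [y yD2 /esym eqC] := astab1_eq_of_maximal m1D1
    (fun y yD2 => leq_trans (max2 y yD2) le21) (eq_marks _ (astab1_sub _ _)).
  by exists m1, y.
have [y yD1 eqC] := astab1_eq_of_maximal m2D2
  (fun y yD1 => leq_trans (max1 y yD1) le12) (esym (eq_marks _ (astab1_sub _ _))).
by exists y, m2.
Qed.

Lemma equal_marks_equivariant_inj to1 to2 D1 D2 :
    [acts G, on D1 | to1] -> [acts G, on D2 | to2] ->
    (forall H : {group aT}, H \subset G ->
       #|'Fix_(D1 | to1)(H)| = #|'Fix_(D2 | to2)(H)|) ->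
  exists beta : T -> T, [/\ {in D2, forall y, beta y \in D1},
    {in D2 &, injective beta} & {in D2 & G, forall y g, beta (to2 y g) = to1 (beta y) g}].
Proof.
elim: {D1}_.+1 {-2}D1 (ltnSn #|D1|) D2 => // n IH D1 ltD1n D2 actsD1 actsD2 eq_marks.
have eq_card : #|D1| = #|D2| by have := eq_marks 1%G (sub1G G); rewrite !afix1 !setIT.
have [D1_0 | D1n0] := eqVneq D1 set0.
  have D2_0 : D2 = set0 by apply/eqP; rewrite -cards_eq0 -eq_card D1_0 cards0.
  by exists id; split=> y; rewrite D2_0 inE.
have D2n0 : D2 != set0 by rewrite -card_gt0 -eq_card card_gt0.
have [x1 [x2 [x1D1 x2D2] eq_astab]] := exists_eq_astab1 D1n0 D2n0 eq_marks.
pose O1 := orbit to1 G x1; pose O2 := orbit to2 G x2.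
have sO1D1 : O1 \subset D1 by rewrite acts_sub_orbit.
have sO2D2 : O2 \subset D2 by rewrite acts_sub_orbit.
have [beta [beta_in beta_inj beta_act]] : exists beta : T -> T,
    [/\ {in D2 :\: O2, forall y, beta y \in D1 :\: O1}, {in D2 :\: O2 &, injective beta} &
      {in D2 :\: O2 & G, forall y g, beta (to2 y g) = to1 (beta y) g}].
  apply: IH; rewrite ?actsD ?acts_orbit //.
    rewrite -ltnS; apply: leq_ltn_trans ltD1n.
    apply: leq_ltn_trans (proper_card (properD1 x1D1)).
    by rewrite subset_leq_card // setDS // sub1set orbit_refl.
  move=> H sHG; rewrite !card_afixD // eq_marks //.
  by rewrite (card_afix_orbit_transport eq_astab).
have inD2O2 y : y \in D2 -> y \notin O2 -> y \in D2 :\: O2 by rewrite in_setD => -> ->.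
exists (fun y => if y \in O2 then orbit_transport to1 to2 x1 x2 y else beta y); split.
- move=> y yD2; case: ifPn => yO2.
    by rewrite (subsetP sO1D1) // (orbit_transport_orbit eq_astab).
  by have /setDP[] := beta_in y (inD2O2 y yD2 yO2).
- move=> y z yD2 zD2 /=; case: ifPn => yO2; case: ifPn => zO2.
  + exact: (orbit_transport_inj eq_astab).
  + move=> eq_yz; have /setDP[_] := beta_in z (inD2O2 z zD2 zO2).
    by rewrite -eq_yz (orbit_transport_orbit eq_astab).
  + move=> eq_yz; have /setDP[_] := beta_in y (inD2O2 y yD2 yO2).
    by rewrite eq_yz (orbit_transport_orbit eq_astab).
  + by apply: beta_inj; apply: inD2O2.
move=> y g yD2 gG /=; rewrite (acts_act (acts_orbit _ _ _) gG) ?subxx //.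
case: ifPn => yO2; first exact: (orbit_transport_actE eq_astab).
exact: beta_act (inD2O2 y yD2 yO2) gG.
Qed.

Lemma equal_marks_act_iso to1 to2 :
    (forall H : {group aT}, H \subset G -> #|'Fix_to1(H)| = #|'Fix_to2(H)|) ->
  exists2 beta : T -> T, injective beta &
    forall y g, g \in G -> beta (to2 y g) = to1 (beta y) g.
Proof.
move=> eq_marks; have actsT to : [acts G, on [set: T] | to].
  by apply/subsetP => g gG; rewrite !inE gG; apply/subsetP => y; rewrite !inE.
have [|beta [_ beta_inj beta_act]] := equal_marks_equivariant_inj (actsT to1) (actsT to2).
  by move=> H sHG; rewrite !setTI eq_marks.
by exists beta => [y z|y g]; [apply: beta_inj | apply: beta_act]; rewrite inE.
Qed.

End ActionsWithEqualMarks.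

Local Open Scope group_scope.

Lemma afix_act_in (aT : finGroupType) (D H : {group aT}) (T : finType) (to : action D T) w h :
  H \subset D -> h \in H -> (to w h \in 'Fix_to(H)) = (w \in 'Fix_to(H)).
Proof.
move=> sHD hH; have hD := subsetP sHD h hH.
apply/idP/idP => [Fwh | Fw]; last by rewrite (afixP Fw).
by rewrite -[w](actKin to hD) (afixP Fwh) ?groupV.
Qed.

Section OrbitRepresentatives.
Variables (aT : finGroupType) (G : {group aT}) (T : finType) (to : action G T).

Definition orbit_rep t := odflt t [pick w in orbit to G t].

Lemma orbit_rep_orbit t : orbit_rep t \in orbit to G t.
Proof. by rewrite /orbit_rep; case: pickP => [w -> //|/(_ t)]; rewrite orbit_refl. Qed.

Lemma orbit_rep_eq t w : w \in orbit to G t -> orbit_rep w = orbit_rep t.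
Proof.
move=> wt; rewrite /orbit_rep (orbit_in_eqP (subxx G) wt).
by case: pickP => // /(_ t); rewrite orbit_refl.
Qed.

Lemma orbit_repP r w : orbit_rep r = r -> (orbit_rep w == r) = (w \in orbit to G r).
Proof.
move=> rr; apply/eqP/idP => [<-|wr]; last by rewrite (orbit_rep_eq wr).
by rewrite orbit_in_sym ?orbit_rep_orbit.
Qed.

Lemma sum_orbit_reps (R : nmodType) (F : T -> R) :
  (\sum_t F t = \sum_(r | orbit_rep r == r) \sum_(w in orbit to G r) F w)%R.
Proof.
rewrite (partition_big orbit_rep (fun r => orbit_rep r == r)) => [|t _]; last first.
  by rewrite (orbit_rep_eq (orbit_rep_orbit t)).
by apply: eq_bigr => r /eqP rr; apply: eq_bigl => w; rewrite orbit_repP.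
Qed.

End OrbitRepresentatives.

Local Open Scope ring_scope.

Lemma count_map_enum (T : finType) (R : eqType) (C : {pred T}) (g : T -> R) v :
  count_mem v (map g (enum C)) = #|[set w in C | g w == v]|.
Proof.
rewrite count_map cardE -size_filter /enum_mem -filter_predI.
by congr size; apply: eq_filter => w; rewrite !inE andbC.
Qed.

Section LocalRing.
Variable O : idomainType.
Hypothesis Oloc : is_local O.
Implicit Types x y : O.

Lemma mO0 : 0 \in @mO O.
Proof. by rewrite inE unitr0. Qed.

Lemma N1_notin_mO : -1 \notin @mO O.
Proof. by rewrite inE unitrN1. Qed.

Lemma mOD x y : x \in @mO O -> y \in @mO O -> x + y \in @mO O.
Proof. exact: (proj1 Oloc). Qed.

Lemma mOMl x y : y \in @mO O -> x * y \in @mO O.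
Proof. exact: (proj2 Oloc). Qed.

Lemma mOMr x y : x \in @mO O -> x * y \in @mO O.
Proof. by rewrite mulrC; apply: mOMl. Qed.

Lemma mON x : x \in @mO O -> - x \in @mO O.
Proof. by rewrite -mulN1r; apply: mOMl. Qed.

Lemma mO_sum (I : Type) (r : seq I) (P : pred I) (F : I -> O) :
  (forall i, P i -> F i \in @mO O) -> \sum_(i <- r | P i) F i \in @mO O.
Proof. by move=> mF; elim/big_rec: _ => [|i x /mF]; [apply: mO0 | apply: mOD]. Qed.

Lemma mO_prodB (I : Type) (r : seq I) (F G : I -> O) :
  (forall i, F i - G i \in @mO O) -> \prod_(i <- r) F i - \prod_(i <- r) G i \in @mO O.
Proof.
move=> mFG; elim: r => [|i r IHr]; first by rewrite !big_nil subrr mO0.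
rewrite !big_cons.
have -> : F i * \prod_(j <- r) F j - G i * \prod_(j <- r) G j =
    F i * (\prod_(j <- r) F j - \prod_(j <- r) G j) + (F i - G i) * \prod_(j <- r) G j.
  by rewrite mulrBr mulrBl addrA subrK.
by apply: mOD; [apply: mOMl | apply: mOMr].
Qed.

Lemma mO_detB n (X Z : 'M[O]_n) :
  (forall i j, X i j - Z i j \in @mO O) -> \det X - \det Z \in @mO O.
Proof.
by move=> mXZ; rewrite -sumrB; apply: mO_sum => s _; rewrite -mulrBr mOMl ?mO_prodB.
Qed.

(* det (N M) = 1 modulo mO, so it is nonzero and N M has rank n over the fraction field. *)
Lemma leq_of_mulmx_congr1 n n' (N : 'M[O]_(n, n')) (M : 'M[O]_(n', n)) :
  (forall i j, (N *m M) i j - (i == j)%:R \in @mO O) -> (n <= n')%N.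
Proof.
move=> NM1; have det_nz : \det (N *m M) != 0.
  apply: contraNneq N1_notin_mO => det0.
  have := @mO_detB n (N *m M) 1%:M; rewrite det0 det1 sub0r; apply=> i j.
  by rewrite [1%:M i j]mxE.
have : \rank (map_mx (@tofrac O) (N *m M)) = n.
  by apply: mxrank_unit; rewrite unitmxE det_map_mx unitfE tofrac_eq0.
rewrite map_mxM => <-; exact: leq_trans (mxrankM_maxr _ _) (rank_leq_row _).
Qed.

Lemma mO_sum_level_sets (T : finType) (C : {pred T}) (g : T -> O) :
  (forall v, #|[set w in C | g w == v]|%:R \in @mO O) -> \sum_(w in C) g w \in @mO O.
Proof.
move=> m_levels; rewrite -big_enum /= -(big_map g xpredT id) -big_undup_iterop_count.
apply: mO_sum => v _; rewrite Monoid.iteropE iter_addr_0 count_map_enum -mulr_natr.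
exact: mOMl.
Qed.

End LocalRing.

Section PGroupSums.
Variables (O : idomainType) (p : nat).
Hypothesis Oloc : is_local O.
Hypothesis p_mO : p%:R \in @mO O.
Variables (aT : finGroupType) (D H : {group aT}) (T : finType) (to : action D T).
Hypotheses (pH : p.-group H) (sHD : H \subset D).

Lemma natr_card_fixfree_mO (C : {set T}) :
  [acts H, on C | to] -> 'Fix_(C | to)(H) = set0 -> #|C|%:R \in @mO O.
Proof.
move=> actsC noFix; have := pgroup_fix_mod pH actsC; rewrite noFix cards0 mod0n.
by move/eqP/dvdnP=> [k ->]; rewrite natrM mOMl.
Qed.

Lemma mO_sum_nonfixed (g : T -> O) :
    (forall w h, h \in H -> g (to w h) = g w) ->
  \sum_(w in ~: 'Fix_to(H)) g w \in @mO O.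
Proof.
move=> g_inv; apply: mO_sum_level_sets => // v; apply: natr_card_fixfree_mO.
  apply/subsetP => h hH; rewrite in_setI (subsetP sHD) //= in_set.
  apply/subsetP => w /setIdP[wnF gw]; rewrite inE; apply/setIdP.
  by rewrite in_setC afix_act_in // -in_setC (g_inv w h hH).
by apply/setP => w; rewrite in_setI in_set0; apply/negP => /andP[/setIdP[/setCP]].
Qed.

End PGroupSums.

Lemma sum_seq_sub (V : choiceType) (Y : seq V) (R : nmodType) (F : V -> R) :
  uniq Y -> \sum_(t : seq_sub Y) F (val t) = \sum_(y <- Y) F y.
Proof.
move=> uY; have enumY : map val (enum {: seq_sub Y}) = Y.
  by rewrite enumT unlock val_seq_sub_enum.
by rewrite -[in RHS]enumY big_map enumT /index_enum unlock.
Qed.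

Section BasisCoordinates.
Variables (O : idomainType) (A : algType O) (Y : seq A).
Hypothesis Ybasis : is_basis Y.

Definition bcoord (y a : A) : O :=
  proj1_sig (constructive_indefinite_description _ (proj1 (proj2 Ybasis) a)) y.

Lemma bcoordE a : a = \sum_(y <- Y) bcoord y a *: y.
Proof. by rewrite /bcoord; case: constructive_indefinite_description. Qed.

Lemma bcoord_unique (c : A -> O) a :
  a = \sum_(y <- Y) c y *: y -> {in Y, forall y, c y = bcoord y a}.
Proof.
move=> Ea y yY; apply/eqP; rewrite -subr_eq0; apply/eqP.
apply: (proj2 (proj2 Ybasis) (fun y => c y - bcoord y a)) yY.
by rewrite (eq_bigr _ (fun w _ => scalerBl _ _ _)) sumrB -Ea -bcoordE subrr.
Qed.

Lemma bcoord_basis w y : w \in Y -> y \in Y -> bcoord w y = (w == y)%:R.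
Proof.
move=> wY yY; apply/esym/(bcoord_unique (c := fun w => (w == y)%:R)) => //.
rewrite (bigD1_seq y) ?(proj1 Ybasis) //= eqxx scale1r big1 ?addr0 // => x /negbTE.
by rewrite eq_sym => ->; rewrite scale0r.
Qed.

Lemma bcoord_mull l a y : y \in Y ->
  bcoord y (l * a) = \sum_(w <- Y) bcoord w a * bcoord y (l * w).
Proof.
move=> yY; apply/esym/(bcoord_unique (c := fun y => \sum_(w <- Y) _ * bcoord y _)) => //.
rewrite [in LHS](bcoordE a) mulr_sumr.
under eq_bigr => w _ do rewrite -scalerAr [l * w]bcoordE scaler_sumr.
rewrite exchange_big /=; apply: eq_bigr => x _.
by rewrite scaler_suml; apply: eq_bigr => w _; rewrite scalerA.
Qed.

Lemma bcoord_mul2 (l l' r r' : A) a w :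
    l' * l = 1 -> r * r' = 1 -> perm_eq [seq l * y * r | y <- Y] Y -> w \in Y ->
  bcoord (l * w * r) (l * a * r) = bcoord w a.
Proof.
move=> l'l rr' permY wY.
apply: (bcoord_unique (c := fun y => bcoord (l * y * r) (l * a * r))) wY.
have Y_lr : l * a * r = \sum_(y <- Y) bcoord (l * y * r) (l * a * r) *: (l * y * r).
  by rewrite [LHS]bcoordE [LHS](perm_big [seq l * y * r | y <- Y]) ?big_map // perm_sym.
transitivity (l' * (l * a * r) * r'); first by rewrite !mulrA l'l mul1r -mulrA rr' mulr1.
rewrite {1}Y_lr mulr_sumr mulr_suml; apply: eq_bigr => y _.
by rewrite -scalerAr -scalerAl; congr (_ *: _); rewrite !mulrA l'l mul1r -mulrA rr' mulr1.
Qed.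

End BasisCoordinates.

Section TwistedAction.
Variables (O : idomainType) (A : algType O) (gT : finGroupType).
Variables (S : {group gT}) (sigma : gT -> A) (Y : seq A).
Hypothesis sigma_hom : interior_hom S sigma.
Hypothesis Ybasis : is_basis Y.
Hypothesis Yinv : SS_invariant S sigma Y.

Lemma sigmaM : {in S &, {morph sigma : x y / (x * y)%g >-> x * y}}.
Proof. exact: (proj2 sigma_hom). Qed.

Lemma mulVsigma s : s \in S -> sigma s^-1%g * sigma s = 1.
Proof. by move=> sS; rewrite -sigmaM ?groupV // mulVg (proj1 sigma_hom). Qed.

Lemma mulsigmaV s : s \in S -> sigma s * sigma s^-1%g = 1.
Proof. by move=> sS; rewrite -sigmaM ?groupV // mulgV (proj1 sigma_hom). Qed.

Lemma perm_eq_mul2Y s t : s \in S -> t \in S ->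
  perm_eq [seq sigma s * y * sigma t | y <- Y] Y.
Proof.
move=> sS tS; rewrite (map_comp (fun y => y * sigma t) (fun y => sigma s * y)).
by apply: perm_trans (proj2 (Yinv tS)); apply: perm_map (proj1 (Yinv sS)).
Qed.

Lemma mem_mul2Y s t y : s \in S -> t \in S -> y \in Y -> sigma s * y * sigma t \in Y.
Proof. by move=> sS tS yY; rewrite -(perm_mem (perm_eq_mul2Y sS tS)); apply: map_f. Qed.

Section Twist.
Variables (Q : {group gT}) (al : gT -> gT).
Hypothesis alM : {in Q &, {morph al : x y / (x * y)%g}}.
Hypothesis alS : {in Q, forall x, al x \in S}.

Lemma al_morph1 : al 1%g = 1%g.
Proof. by apply: (mulgI (al 1%g)); rewrite -alM // !mulg1. Qed.

Lemma al_morphV x : x \in Q -> al x^-1%g = (al x)^-1%g.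
Proof. by move=> xQ; apply: (mulgI (al x)); rewrite -alM ?groupV // !mulgV al_morph1. Qed.

(* The biset {}^al_Q Y_S as a right action of Q x S: (x, s) sends y to al(x)^-1 y s. *)
Definition twist (g : gT * gT) (a : A) := sigma (al g.1^-1%g) * a * sigma g.2.

Lemma twistK g : g \in setX Q S ->
  cancel (twist g) (fun a => sigma (al g.1) * a * sigma g.2^-1%g).
Proof.
case: g => g1 g2 /setXP[g1Q g2S] a; rewrite /twist /= al_morphV // !mulrA mulsigmaV ?alS //.
by rewrite mul1r -mulrA mulsigmaV // mulr1.
Qed.

Lemma mem_twistY g y : g \in setX Q S -> y \in Y -> twist g y \in Y.
Proof. by case: g => g1 g2 /setXP[g1Q g2S] yY; rewrite mem_mul2Y ?alS ?groupV. Qed.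

Lemma bcoord_twist g w a : g \in setX Q S -> w \in Y ->
  bcoord Ybasis (twist g w) (twist g a) = bcoord Ybasis w a.
Proof.
case: g => g1 g2 /setXP[g1Q g2S] wY.
apply: (bcoord_mul2 _ (l' := sigma (al g1)) (r' := sigma g2^-1%g)) => //=.
- by rewrite al_morphV // mulsigmaV ?alS.
- exact: mulsigmaV.
- by rewrite perm_eq_mul2Y ?alS ?groupV.
Qed.

Definition twist_act (t : seq_sub Y) g :=
  if g \in setX Q S then insubd t (twist g (val t)) else t.

Lemma val_twist_act t g : g \in setX Q S -> val (twist_act t g) = twist g (val t).
Proof. by move=> gQS; rewrite /twist_act gQS insubdK // mem_twistY ?(valP t). Qed.

Lemma twist_act_is_action : is_action (setX Q S) twist_act.
Proof.
split=> [g t u | t g h gQS hQS]; last first.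
  apply: val_inj; rewrite !val_twist_act ?groupM //.
  case: g h gQS hQS => [g1 g2] [h1 h2] /setXP[g1Q g2S] /setXP[h1Q h2S].
  by rewrite /twist /= invMg alM ?groupV // !sigmaM ?alS ?groupV // !mulrA.
rewrite /twist_act; case: ifP => // gQS /(congr1 val).
by rewrite !insubdK ?mem_twistY ?(valP t) ?(valP u) // => /(can_inj (twistK gQS))/val_inj.
Qed.

Definition twist_action := Action twist_act_is_action.

Lemma twist_actionE t g : g \in setX Q S -> val (twist_action t g) = twist g (val t).
Proof. exact: val_twist_act. Qed.

End Twist.
End TwistedAction.

Lemma mul_intertwine_inv (R : ringType) (a b e e' : R) :
  e * e' = 1 -> e' * e = 1 -> b * e = e * a -> a * e' = e' * b.
Proof.
by move=> ee' e'e be; rewrite -[a * e']mul1r -e'e -mulrA [e * _]mulrA -be -mulrA ee' mulr1.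
Qed.

Lemma twist_intertwine (O : idomainType) (A : algType O) (gT : finGroupType)
    (sigma : gT -> A) (Q S : {group gT}) (al al' : gT -> gT) (e : A) :
    {in Q, forall x, sigma (al' x) * e = e * sigma (al x)} ->
  forall h a, h \in setX Q S -> twist sigma al' h (e * a) = e * twist sigma al h a.
Proof.
by move=> intertwine [h1 h2] a /setXP[h1Q _]; rewrite /twist /= !mulrA intertwine ?groupV.
Qed.

Section TwistMarks.
Variables (O : idomainType) (A : algType O) (gT : finGroupType).
Variables (S : {group gT}) (sigma : gT -> A) (Y : seq A) (p : nat).
Hypotheses (sigma_hom : interior_hom S sigma) (Ybasis : is_basis Y).
Hypothesis Yinv : SS_invariant S sigma Y.
Hypotheses (Oloc : is_local O) (p_mO : p%:R \in @mO O) (pS : p.-group S).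
Variables (P : {group gT}) (al al' : gT -> gT) (e e' : A).
Hypotheses (sPS : P \subset S) (ee' : e * e' = 1) (e'e : e' * e = 1).
Hypotheses (alM : {in P &, {morph al : x y / (x * y)%g}}) (alS : {in P, forall x, al x \in S}).
Hypothesis al'M : {in P &, {morph al' : x y / (x * y)%g}}.
Hypothesis al'S : {in P, forall x, al' x \in S}.
Hypothesis intertwine : {in P, forall x, sigma (al' x) * e = e * sigma (al x)}.

Local Notation to := (twist_action sigma_hom Yinv alM alS).
Local Notation to' := (twist_action sigma_hom Yinv al'M al'S).
Local Notation crd := (bcoord Ybasis).

Section FixedPoints.
Variable H : {group gT * gT}.
Hypothesis sHPS : H \subset setX P S.

Lemma twist_afix z h : z \in 'Fix_to(H) -> h \in H -> twist sigma al h (val z) = val z.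
Proof.
by move=> /afixP zF hH; rewrite -(twist_actionE sigma_hom Yinv alM alS) ?zF ?(subsetP sHPS).
Qed.

Lemma bcoord_intertwine_invariant z z' w h : z \in 'Fix_to(H) -> z' \in 'Fix_to(H) -> h \in H ->
  crd (val z') (e' * val (to' w h)) * crd (val (to' w h)) (e * val z) =
  crd (val z') (e' * val w) * crd (val w) (e * val z).
Proof.
move=> zF z'F hH; have hPS := subsetP sHPS h hH.
have intertwine' : {in P, forall x, sigma (al x) * e' = e' * sigma (al' x)}.
  by move=> x xP; apply: mul_intertwine_inv ee' e'e (intertwine xP).
rewrite twist_actionE // -(twist_intertwine intertwine' _ hPS) -{1}(twist_afix z'F hH).
rewrite (bcoord_twist sigma_hom Ybasis Yinv alM alS _ hPS (valP z')).
rewrite -{1}(twist_afix zF hH) -(twist_intertwine intertwine _ hPS).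
by rewrite (bcoord_twist sigma_hom Ybasis Yinv al'M al'S _ hPS (valP w)).
Qed.

(* Summed over all of Y, this is the z'-coordinate of e' * (e * z) = z; the part of the sum
   over points not fixed by the p-group H vanishes modulo mO. *)
Lemma sum_afix_bcoord_congr1 z z' : z \in 'Fix_to(H) -> z' \in 'Fix_to(H) ->
  \sum_(w in 'Fix_to'(H)) crd (val z') (e' * val w) * crd (val w) (e * val z)
    - (z' == z)%:R \in @mO O.
Proof.
move=> zF z'F; have pH : p.-group H.
  apply: pgroupS sHPS _; rewrite /pgroup cardsX pnatM.
  by apply/andP; split; [apply: pgroupS sPS pS | apply: pS].
have -> : (z' == z)%:R =
    \sum_(w : seq_sub Y) crd (val z') (e' * val w) * crd (val w) (e * val z).
  rewrite -val_eqE -(bcoord_basis Ybasis) ?(valP z) ?(valP z') //.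
  rewrite -[val z in LHS]mul1r -e'e -mulrA (bcoord_mull Ybasis _ _ (valP z')).
  rewrite -(sum_seq_sub (fun w => crd w (e * val z) * crd (val z') (e' * w)) (proj1 Ybasis)).
  by apply: eq_bigr => w _; rewrite mulrC.
rewrite [X in _ - X](bigID (mem 'Fix_to'(H))) /= opprD addrA subrr add0r; apply: mON => //.
rewrite (eq_bigl (fun w => w \in ~: 'Fix_to'(H))) => [|w]; last by rewrite in_setC.
apply: (mO_sum_nonfixed Oloc p_mO pH sHPS) => w h hH.
exact: bcoord_intertwine_invariant.
Qed.

Lemma card_afix_twist_le : (#|'Fix_to(H)| <= #|'Fix_to'(H)|)%N.
Proof.
pose N := \matrix_(i < #|'Fix_to(H)|, j < #|'Fix_to'(H)|)
  crd (val (enum_val i)) (e' * val (enum_val j)).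
pose M := \matrix_(i < #|'Fix_to'(H)|, j < #|'Fix_to(H)|)
  crd (val (enum_val i)) (e * val (enum_val j)).
apply: (leq_of_mulmx_congr1 Oloc (N := N) (M := M)) => i j.
have := sum_afix_bcoord_congr1 (enum_valP j) (enum_valP i).
rewrite big_enum_val (inj_eq enum_val_inj) mxE.
by under [X in _ -> X - _ \in _]eq_bigr => k _ do rewrite !mxE.
Qed.

End FixedPoints.

End TwistMarks.

Section TwistIso.
Variables (O : idomainType) (A : algType O) (gT : finGroupType).
Variables (S : {group gT}) (sigma : gT -> A) (Y : seq A) (p : nat).
Hypotheses (sigma_hom : interior_hom S sigma) (Ybasis : is_basis Y).
Hypothesis Yinv : SS_invariant S sigma Y.
Hypotheses (Oloc : is_local O) (p_mO : p%:R \in @mO O) (pS : p.-group S).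
Variables (P : {group gT}) (al al' : gT -> gT) (e : A).
Hypotheses (sPS : P \subset S) (e_unit : isunitA e).
Hypotheses (alM : {in P &, {morph al : x y / (x * y)%g}}) (alS : {in P, forall x, al x \in S}).
Hypothesis al'M : {in P &, {morph al' : x y / (x * y)%g}}.
Hypothesis al'S : {in P, forall x, al' x \in S}.
Hypothesis intertwine : {in P, forall x, sigma (al' x) * e = e * sigma (al x)}.

Local Notation to := (twist_action sigma_hom Yinv alM alS).
Local Notation to' := (twist_action sigma_hom Yinv al'M al'S).

Lemma card_afix_twist_eq (H : {group gT * gT}) : H \subset setX P S ->
  #|'Fix_to(H)| = #|'Fix_to'(H)|.
Proof.
have [e' [ee' e'e]] := e_unit; move=> sHPS; apply/eqP; rewrite eqn_leq.
have intertwine' : {in P, forall x, sigma (al x) * e' = e' * sigma (al' x)}.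
  by move=> x xP; apply: mul_intertwine_inv ee' e'e (intertwine xP).
have le_marks := card_afix_twist_le sigma_hom Ybasis Yinv Oloc p_mO pS sPS.
by rewrite (le_marks _ _ _ _ ee' e'e alM alS al'M al'S intertwine H sHPS)
           (le_marks _ _ _ _ e'e ee' al'M al'S alM alS intertwine' H sHPS).
Qed.

Lemma twisted_bisets_iso : exists beta : A -> A,
  [/\ {in Y, forall y, beta y \in Y}, {in Y &, injective beta} &
      forall x s y, x \in P -> s \in S -> y \in Y ->
        beta (sigma (al' x) * y * sigma s) = sigma (al x) * beta y * sigma s].
Proof.
have [beta beta_inj beta_act] := equal_marks_act_iso card_afix_twist_eq.
exists (fun a => if insub a is Some t then val (beta t) else a); split.
- by move=> y yY; rewrite insubT /= (valP (beta _)).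
- by move=> y z yY zY; rewrite !insubT => /val_inj/beta_inj [].
move=> x s y xP sS yY; have xsPS : (x^-1, s)%g \in setX P S by rewrite inE /= groupV xP.
have -> : sigma (al' x) * y * sigma s = val (to' (SeqSub yY) (x^-1, s)%g).
  by rewrite twist_actionE // /twist /= invgK.
by rewrite valK beta_act // twist_actionE // /twist /= invgK insubT.
Qed.

End TwistIso.

Section BrauerFixed.
Variables (O : idomainType) (A : algType O) (gT : finGroupType).
Variables (S : {group gT}) (sigma : gT -> A) (Y : seq A).
Hypotheses (sigma_hom : interior_hom S sigma) (Ybasis : is_basis Y).
Hypothesis Yinv : SS_invariant S sigma Y.
Variable U : {group gT * gT}.
Hypothesis sUSS : U \subset setX S S.

Let idM : {in S &, {morph id : x y / (x * y)%g}} := fun _ _ _ _ => erefl.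
Let idS : {in S, forall x, id x \in S} := fun _ xS => xS.
Local Notation to := (twist_action sigma_hom Yinv idM idS \ sUSS)%act.

Lemma act2E u a : act2 sigma u a = twist sigma id u^-1%g a.
Proof. by case: u => u1 u2; rewrite /act2 /twist /= invgK. Qed.

Lemma act2_twist_action u t : u \in U -> act2 sigma u (val t) = val (to t u^-1%g).
Proof. by move=> uU; rewrite ractE twist_actionE ?act2E // groupV (subsetP sUSS). Qed.

Lemma act2_sumZ (I : Type) (r : seq I) (P : pred I) (k : I -> O) (F : I -> A) u :
  act2 sigma u (\sum_(i <- r | P i) k i *: F i) = \sum_(i <- r | P i) k i *: act2 sigma u (F i).
Proof.
by rewrite /act2 mulr_sumr mulr_suml; apply: eq_bigr => i _; rewrite -scalerAr -scalerAl.
Qed.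

Lemma trace_sumZ (V W : {set gT * gT}) (I : Type) (r : seq I) (P : pred I) k (F : I -> A) :
  trace sigma V W (\sum_(i <- r | P i) k i *: F i) =
  \sum_(i <- r | P i) k i *: trace sigma V W (F i).
Proof.
rewrite /trace; under eq_bigr => C _ do rewrite act2_sumZ.
by rewrite exchange_big; apply: eq_bigr => i _; rewrite scaler_sumr.
Qed.

Lemma trace_astab1 t : trace sigma 'C[t | to] U (val t) = \sum_(w in orbit to U t) val w.
Proof.
set V := 'C[t | to]; have sVU : V \subset U := astab1_sub to t.
have reprP C : C \in lcosets V U -> repr C \in U /\ C = (repr C *: V)%g.
  case/lcosetsP=> x xU ->; have: repr (x *: V)%g \in (x *: V)%g by apply/mem_repr/lcoset_refl.
  move=> rV; split; last by apply/esym/lcoset_eqP.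
  by case/lcosetP: rV => v vV ->; rewrite groupM // (subsetP sVU).
pose F C := to t (repr C)^-1%g.
rewrite /trace (eq_bigr (fun C => val (F C))) => [|C /reprP[rU _]]; last first.
  exact: act2_twist_action.
rewrite -(big_imset val (h := F)) /=; last first.
  move=> C1 C2 /reprP[r1U E1] /reprP[r2U E2] /eqP.
  rewrite act_eq_astab1 ?groupV // invgK => r1r2; rewrite E1 E2; apply/lcoset_eqP.
  by rewrite mem_lcoset -(groupV V) invMg invgK.
apply: eq_bigl => w; apply/imsetP/imsetP => [[C /reprP[rU _] ->]|[u uU ->]].
  by exists (repr C)^-1%g; rewrite ?groupV.
have uVC : (u^-1 *: V)%g \in lcosets V U by apply/lcosetsP; exists u^-1%g; rewrite ?groupV.
exists (u^-1 *: V)%g => //; apply/eqP; rewrite act_eq_astab1 ?groupV ?(proj1 (reprP _ uVC)) //.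
have [_ /lcoset_eqP] := reprP _ uVC; rewrite mem_lcoset => rVu.
by rewrite invgK -groupV invMg.
Qed.

Lemma bcoord_fixed_invariant a t u : fixedby sigma U a -> u \in U ->
  bcoord Ybasis (val (to t u)) a = bcoord Ybasis (val t) a.
Proof.
move=> aU uU; have uSS := subsetP sUSS u uU.
rewrite ractE twist_actionE // -{1}(aU _ (groupVr uU)) act2E invgK.
exact: (bcoord_twist sigma_hom Ybasis Yinv idM idS _ uSS (valP t)).
Qed.

Lemma fixed_in_brauer_kernel a : (forall t, 'C[t | to] \proper U) ->
  fixedby sigma U a -> in_brauer_kernel sigma U a.
Proof.
move=> stab_proper aU; pose c (t : seq_sub Y) := bcoord Ybasis (val t) a.
pose b (V : {group gT * gT}) :=
  \sum_(t | (orbit_rep to t == t) && ('C[t | to]%G == V)) c t *: val t.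
exists [::], b; split=> // [V _ u uV|].
  rewrite act2_sumZ; apply: eq_bigr => t /andP[_ /eqP stabV]; rewrite -stabV in uV.
  by rewrite act2_twist_action ?(subsetP (astab1_sub to t)) // astab1_act_id ?groupV.
have trace_b (V : {group gT * gT}) : trace sigma V U (b V) =
    \sum_(t | (orbit_rep to t == t) && ('C[t | to]%G == V))
      c t *: \sum_(w in orbit to U t) val w.
  by rewrite trace_sumZ; apply: eq_bigr => t /andP[_ /eqP <-]; rewrite trace_astab1.
rewrite big_nil add0r (eq_bigr _ (fun V _ => trace_b V)).
rewrite -(partition_big _ _ (fun t _ => stab_proper t)) /=.
rewrite [LHS](bcoordE Ybasis a) -(sum_seq_sub (fun y => bcoord Ybasis y a *: y) (proj1 Ybasis)).
rewrite (sum_orbit_reps to); apply: eq_bigr => r _; rewrite scaler_sumr.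
by apply: eq_bigr => _ /imsetP[u uU ->]; rewrite bcoord_fixed_invariant.
Qed.

Lemma brauer_nz_fixed_basis : brauer_nz sigma U -> exists2 y, y \in Y & fixedby sigma U y.
Proof.
case=> a [aU a_nker]; have [t tF | noFix] := pickP [pred t | t \in 'Fix_to(U)].
  exists (val t); first exact: valP.
  by move=> u uU; rewrite act2_twist_action // (afixP tF) ?groupV.
case: a_nker; apply: fixed_in_brauer_kernel aU => t.
rewrite properEneq astab1_sub andbT; apply: contraFneq (noFix t) => stabU /=.
by apply/afixP => u uU; apply: astab1_act_id; rewrite stabU.
Qed.

End BrauerFixed.

Section Delta.
Local Open Scope group_scope.
Variables (gT : finGroupType) (P S : {group gT}) (f : gT -> gT).
Hypothesis fM : {in P &, {morph f : x y / x * y}}.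

Lemma Delta_group_set : group_set (Delta f P).
Proof.
apply/group_setP; split=> [|_ _ /imsetP[x xP ->] /imsetP[y yP ->]].
  by apply/imsetP; exists 1; rewrite ?group1 // (al_morph1 fM).
by apply/imsetP; exists (x * y); rewrite ?groupM ?fM.
Qed.

Definition Delta_group := Group Delta_group_set.

Lemma Delta_sub_setX : P \subset S -> f @: P \subset S -> Delta f P \subset setX S S.
Proof.
move=> sPS sfPS; apply/subsetP => _ /imsetP[x xP ->].
by rewrite inE /= (subsetP sfPS) ?imset_f ?(subsetP sPS).
Qed.

Lemma fixedby_Delta_intertwine (O : idomainType) (A : algType O) (sigma : gT -> A) e :
    interior_hom S sigma -> P \subset S -> fixedby sigma (Delta f P) e ->
  {in P, forall x, (sigma (f x) * e = e * sigma x)%R}.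
Proof.
move=> sigma_hom sPS efix x xP; rewrite -{2}(efix _ (imset_f _ xP)) /act2 /= -mulrA.
by rewrite (mulVsigma sigma_hom) ?(subsetP sPS) // mulr1.
Qed.

End Delta.

Local Close Scope group_scope.
Unset Implicit Arguments.
Set Strict Implicit.

Theorem proposition4p2 (O : idomainType) (p : nat) (A : algType O)
  (gT : finGroupType) (S : {group gT}) (sigma : gT -> A) (Y : seq A) :
  standing_O O p ->
  (p.-group S)%g ->
  interior_hom S sigma ->
  is_basis Y -> SS_invariant S sigma Y -> (forall y, y \in Y -> isunitA y) ->
  divisible S sigma ->
  forall (P : {group gT}) (f : gT -> gT),
    P \subset S -> Fhom sigma P S f ->
    exists beta : A -> A,
      [/\ (forall y, y \in Y -> beta y \in Y),
          {in Y &, injective beta} &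
          (forall x s y, x \in P -> s \in S -> y \in Y ->
             beta (sigma (f x) * y * sigma s) = sigma x * beta y * sigma s)].
Proof.
case=> Oloc _ _ _ [_ p_mO] pS sigma_hom Ybasis Yinv Yunit _ P f sPS [fM _ sfPS brauer_f].
have fS : {in P, forall x, f x \in S} by move=> x xP; rewrite (subsetP sfPS) ?imset_f.
have [y0 y0Y y0fix] := brauer_nz_fixed_basis sigma_hom Ybasis Yinv
  (U := Delta_group fM) (Delta_sub_setX sPS sfPS) brauer_f.
have idM : {in P &, {morph id : x y / (x * y)%g}} by [].
have idS : {in P, forall x, id x \in S} by move=> x /(subsetP sPS).
exact: (twisted_bisets_iso sigma_hom Ybasis Yinv Oloc p_mO pS (al := id) sPS (Yunit y0 y0Y)
  idM idS fM fS (fixedby_Delta_intertwine sigma_hom sPS y0fix)).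
Qed.
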